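(* (a) The integer pairs $(m,n)$ with $\mathrm{N}_{K/\mathbb{Q}}(m+n\gamma^2)=\pm1$ are exactly $(\pm1,0)$, $(0,\pm1)$, $\pm(-1,1)$, $\pm(2,-1)$, $\pm(-7,4)$. (b) The integer pairs $(m,n)$ with $\mathrm{N}_{K/\mathbb{Q}}(m+n\gamma^2)=\pm5$ are exactly $\pm(1,1)$, $\pm(-3,2)$. (c) The integer pairs $(m,n)$ with $\mathrm{N}_{K/\mathbb{Q}}(m+n\gamma^2)=\pm7$ are exactly $\pm(-1,2)$, $\pm(-5,3)$.
   Context: $\gamma$ is the real root of $x^3-x-1$, $K=\mathbb{Q}(\gamma)$, and $\mathrm{N}_{K/\mathbb{Q}}$ is the field norm; note $\mathrm{N}_{K/\mathbb{Q}}(m+n\gamma^2)=m^3+2m^2n+mn^2+n^3$. *)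

From mathcomp Require Import all_boot all_order all_algebra.
Set Implicit Arguments. Unset Strict Implicit. Unset Printing Implicit Defensive.
Import Order.TTheory GRing.Theory Num.Theory.
Local Open Scope ring_scope.

(* K = Q(gamma), gamma^3 = gamma + 1, with Q-basis (1, gamma, gamma^2).
   The element a + b*gamma + c*gamma^2 acts on K by multiplication; in the
   basis (1, gamma, gamma^2) (row-vector convention) its images are
     alpha*1       = (a, b, c)
     alpha*gamma   = (c, a + c, b)
     alpha*gamma^2 = (b, b + c, a + c)
   using gamma^3 = 1 + gamma, gamma^4 = gamma + gamma^2. *)
Definition mulmx_gamma (a b c : int) : 'M[int]_3 :=
  \matrix_(i < 3, j < 3)
    nth 0 (nth [::] [:: [:: a; b; c]; [:: c; a + c; b]; [:: b; b + c; a + c]] i) j.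

Definition normK (a b c : int) : int := \det (mulmx_gamma a b c).

From Stdlib Require Import ZArith Lia Znumtheory List Bool Ring Reals Lra Psatz.

(* We work in the order Z[γ], with elements written as coordinate triples
   a + bγ + cγ², and solve for all x in Z[γ] with vanishing γ-coordinate and
   N(x) = ±h, h ∈ {1, 5, 7}.

   1. Reduction modulo units. γ is a unit of norm 1. Multiplying x by ±γ^k moves
      its real embedding into the fundamental domain [1, g), g ≈ 1.3247. There the
      factorisation 4 N(y) = embed(y) · qform(y), with qform positive definite,
      confines y to a small box, and an exhaustive search of the box shows
      x = ±γ^k v_h for a fixed representative v_h (theorem [associates]).
   2. Skolem's method. It remains to find the k with [γ^k v_h]_1 = 0. Modulo
      M = 1368675 both γ and γ⁻¹ have order dividing L = 3120; a sieve over k mod L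
      leaves only the classes of known zeros k0, and inside such a class the zero
      is isolated by a p-adic argument (Strassmann-type lemma
      [padic_isolation]): if A ≡ 1 + pQd (mod p²Q) and p ∤ [d w]_1 while
      [w]_1 = 0, then [A^t w]_1 ≠ 0 for all t > 0. All finite checks are done by
      computation ([skolem_check], [box_check], [solutions_check]).
   3. The resulting list of solutions ([thue_solutions], over Z) is transported
      to the determinant normK over mathcomp's int. *)


Local Open Scope Z_scope.

(** The order Z[γ], γ³ = γ + 1, in coordinates w.r.t. (1, γ, γ²). *)
Record O3 := mk { c0 : Z; c1 : Z; c2 : Z }.

Definition add (x y : O3) := mk (c0 x + c0 y) (c1 x + c1 y) (c2 x + c2 y).
Definition opp (x : O3) := mk (- c0 x) (- c1 x) (- c2 x).
Definition sub (x y : O3) := add x (opp y).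
(* Product, reducing γ³ = 1 + γ and γ⁴ = γ + γ². *)
Definition mul (x y : O3) :=
  let g3 := c1 x * c2 y + c2 x * c1 y in
  let g4 := c2 x * c2 y in
  mk (c0 x * c0 y + g3)
     (c0 x * c1 y + c1 x * c0 y + g3 + g4)
     (c0 x * c2 y + c1 x * c1 y + c2 x * c0 y + g4).
Definition cst (c : Z) := mk c 0 0.
Definition zero := cst 0.
Definition one := cst 1.
Definition gam := mk 0 1 0.
Definition gam_inv := mk (-1) 0 1.

Lemma O3_ext x y : c0 x = c0 y -> c1 x = c1 y -> c2 x = c2 y -> x = y.
Proof. destruct x, y; simpl; intros; subst; reflexivity. Qed.

Ltac O3_coordinates :=
  intros; apply O3_ext; cbn [c0 c1 c2 add opp sub mul cst zero one gam gam_inv]; ring.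

Lemma O3_ring : ring_theory zero one add mul sub opp (@eq O3).
Proof. split; O3_coordinates. Qed.

(* The constants cst c form a copy of Z inside O3; declaring this morphism lets
   [ring] compute with integer literals in O3. *)
Lemma cst_morph :
  ring_morph zero one add mul sub opp (@eq O3) 0 1 Z.add Z.mul Z.sub Z.opp Z.eqb cst.
Proof.
  split; try O3_coordinates.
  intros x y Hxy; apply Z.eqb_eq in Hxy; subst; reflexivity.
Qed.

Ltac O3_constant t :=
  match t with
  | cst ?z => match isZcst z with true => z | _ => constr:(NotConstant) end
  | zero => constr:(0%Z)
  | one => constr:(1%Z)
  | _ => constr:(NotConstant)
  end.
Add Ring O3_ring : O3_ring (morphism cst_morph, constants [O3_constant]).

Lemma cst_add a b : cst (a + b) = add (cst a) (cst b). Proof. O3_coordinates. Qed.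
Lemma cst_mul a b : cst (a * b) = mul (cst a) (cst b). Proof. O3_coordinates. Qed.

Lemma c1_add x y : c1 (add x y) = c1 x + c1 y. Proof. reflexivity. Qed.
Lemma c1_scale c x : c1 (mul (cst c) x) = c * c1 x. Proof. cbn; ring. Qed.

Lemma gam_unit : mul gam gam_inv = one. Proof. O3_coordinates. Qed.

Fixpoint npow (x : O3) (n : nat) : O3 :=
  match n with O => one | S n => mul x (npow x n) end.

Lemma npow_add x a b : npow x (a + b) = mul (npow x a) (npow x b).
Proof. induction a as [|a IH]; simpl; [ring | rewrite IH; ring]. Qed.

Lemma npow_mul x a b : npow x (a * b) = npow (npow x a) b.
Proof.
  induction b as [|b IH]; simpl.
  - rewrite Nat.mul_0_r; reflexivity.
  - rewrite Nat.mul_succ_r, Nat.add_comm, npow_add, IH; reflexivity.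
Qed.

Definition gpow (k : Z) : O3 :=
  match k with
  | Z0 => one
  | Zpos n => npow gam (Pos.to_nat n)
  | Zneg n => npow gam_inv (Pos.to_nat n)
  end.

Lemma gpow_succ k : gpow (Z.succ k) = mul gam (gpow k).
Proof.
  destruct k as [|n|n].
  - reflexivity.
  - rewrite <- Pos2Z.inj_succ; cbn [gpow]. rewrite Pos2Nat.inj_succ; reflexivity.
  - assert (Hcancel : forall x, x = mul gam (mul gam_inv x))
      by (intros x; transitivity (mul (mul gam gam_inv) x); [rewrite gam_unit |]; ring).
    destruct n as [|n] using Pos.peano_ind.
    + apply Hcancel.
    + replace (Z.succ (Z.neg (Pos.succ n))) with (Z.neg n) by lia.
      cbn [gpow]. rewrite Pos2Nat.inj_succ; cbn [npow]. apply Hcancel.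
Qed.

Lemma gpow_add a b : gpow (a + b) = mul (gpow a) (gpow b).
Proof.
  induction a as [|a IH|a IH] using Z.peano_ind.
  - simpl; ring.
  - rewrite Z.add_succ_l, !gpow_succ, IH; ring.
  - assert (Hpred : forall z, gpow (Z.pred z) = mul gam_inv (gpow z)).
    { intros z. rewrite <- (Z.succ_pred z) at 2. rewrite gpow_succ.
      transitivity (mul (mul gam gam_inv) (gpow (Z.pred z))); [rewrite gam_unit |]; ring. }
    rewrite Z.add_pred_l, !Hpred, IH; ring.
Qed.

Lemma gpow_nat n : gpow (Z.of_nat n) = npow gam n.
Proof. destruct n; [reflexivity|]. cbn. rewrite SuccNat2Pos.id_succ; reflexivity. Qed.

Lemma gpow_neg_nat n : gpow (- Z.of_nat n) = npow gam_inv n.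
Proof. destruct n; [reflexivity|]. cbn. rewrite SuccNat2Pos.id_succ; reflexivity. Qed.

Definition congr (M : Z) (x y : O3) : Prop := exists E, x = add y (mul (cst M) E).

Lemma congr_refl M x : congr M x x.
Proof. exists zero; ring. Qed.

Lemma congr_trans M x y z : congr M x y -> congr M y z -> congr M x z.
Proof. intros [E1 ->] [E2 ->]. exists (add E2 E1); ring. Qed.

Lemma congr_mul M x x' y y' : congr M x x' -> congr M y y' -> congr M (mul x y) (mul x' y').
Proof.
  intros [E1 ->] [E2 ->].
  exists (add (add (mul x' E2) (mul E1 y')) (mul (cst M) (mul E1 E2))); ring.
Qed.

Lemma congr_npow M x y n : congr M x y -> congr M (npow x n) (npow y n).
Proof.
  intros Hxy. induction n as [|n IH]; cbn [npow]; [apply congr_refl | now apply congr_mul].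
Qed.

Lemma congr_c1 M x y : congr M x y -> c1 x mod M = c1 y mod M.
Proof.
  intros [E ->]. rewrite c1_add, c1_scale, Z.mul_comm. apply Z_mod_plus_full.
Qed.

Definition reduce (M : Z) (x : O3) := mk (c0 x mod M) (c1 x mod M) (c2 x mod M).

Lemma congr_reduce M x : M <> 0 -> congr M x (reduce M x).
Proof.
  intros HM. exists (mk (c0 x / M) (c1 x / M) (c2 x / M)).
  apply O3_ext; cbn; rewrite Zmod_eq_full by exact HM; ring.
Qed.

Fixpoint powmod (M : Z) (x : O3) (n : nat) : O3 :=
  match n with O => reduce M one | S n => reduce M (mul x (powmod M x n)) end.

Lemma congr_powmod M x n : M <> 0 -> congr M (npow x n) (powmod M x n).
Proof.
  intros HM. induction n as [|n IH]; cbn [npow powmod].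
  - apply congr_reduce, HM.
  - eapply congr_trans; [apply congr_mul; [apply congr_refl | exact IH] | now apply congr_reduce].
Qed.

(** Skolem's p-adic isolation of zeros. *)

Definition isolated (A w : O3) : Prop :=
  forall t, (0 < t)%nat -> c1 (mul (npow A t) w) <> 0.


Lemma binomial_truncation P y u : exists E,
  npow (add one (mul (cst P) y)) u =
  add (add one (mul (cst (Z.of_nat u * P)) y)) (mul (cst (P * P)) E).
Proof.
  induction u as [|u [E IH]]; cbn [npow].
  - exists zero. rewrite !cst_mul. ring.
  - rewrite IH. exists (add (mul (cst (Z.of_nat u)) (mul y y)) (mul E (add one (mul (cst P) y)))).
    rewrite Nat2Z.inj_succ, <- Z.add_1_r, !cst_mul, !cst_add. ring.
Qed.

(* This holds for every odd prime (p divides the inner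
   binomial coefficients); it is verified below for the primes that are used. *)
Definition frobenius_lift (p : nat) : Prop := forall Y, exists T,
  npow (add one (mul (cst (Z.of_nat p)) Y)) p =
  add one (mul (mul (cst (Z.of_nat p * Z.of_nat p)) Y) (add one (mul (cst (Z.of_nat p)) T))).

Section PadicIsolation.

Variable p : nat.
Local Notation P := (Z.of_nat p).
Hypothesis P_prime : prime P.
Hypothesis p_frobenius : frobenius_lift p.

Lemma frobenius_step Q y : exists f,
  npow (add one (mul (cst (P * Q)) y)) p =
  add one (mul (cst (P * (P * Q))) (add y (mul (cst P) f))).
Proof.
  destruct (p_frobenius (mul (cst Q) y)) as [T HT].
  exists (mul y T).
  replace (add one (mul (cst (P * Q)) y)) with (add one (mul (cst P) (mul (cst Q) y)))
    by (rewrite cst_mul; ring).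
  rewrite HT, !cst_mul. ring.
Qed.

Lemma frobenius_iter Q d e : exists f,
  npow (add one (mul (cst (P * Q)) d)) (p ^ e) =
  add one (mul (cst (P * (P ^ Z.of_nat e * Q))) (add d (mul (cst P) f))).
Proof.
  induction e as [|e [f IH]].
  - exists zero. cbn [Nat.pow npow]. rewrite Z.pow_0_r, Z.mul_1_l, !cst_mul. ring.
  - rewrite Nat.pow_succ_r', Nat.mul_comm, npow_mul, IH.
    destruct (frobenius_step (P ^ Z.of_nat e * Q) (add d (mul (cst P) f))) as [f' ->].
    exists (add f f').
    rewrite Nat2Z.inj_succ, Z.pow_succ_r by lia. rewrite !cst_mul. ring.
Qed.

Lemma p_part_decomposition t : (0 < t)%nat ->
  exists e u, t = (p ^ e * u)%nat /\ ~ (P | Z.of_nat u).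
Proof.
  assert (Hp : (1 < p)%nat) by (pose proof (prime_ge_2 _ P_prime); lia).
  induction t as [t IH] using (well_founded_induction lt_wf). intros Ht.
  destruct (Zdivide_dec P (Z.of_nat t)) as [[k Hk]|Hnot].
  - assert (Hk0 : 0 < k) by nia.
    assert (Hkt : (0 < Z.to_nat k < t)%nat) by nia.
    destruct (IH (Z.to_nat k) ltac:(lia) ltac:(lia)) as (e & u & Hku & Hu).
    exists (S e), u. split; [|exact Hu].
    rewrite Nat.pow_succ_r', <- Nat.mul_assoc, <- Hku.
    apply Nat2Z.inj. rewrite Nat2Z.inj_mul, Z2Nat.id by lia. lia.
  - exists O, t. split; [cbn; lia | exact Hnot].
Qed.

Lemma padic_isolation Q d w :
  Q <> 0 -> c1 w = 0 -> ~ (P | c1 (mul d w)) -> isolated (add one (mul (cst (P * Q)) d)) w.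
Proof.
  intros HQ Hw Hd t Ht.
  destruct (p_part_decomposition t Ht) as (e & u & -> & Hu).
  rewrite npow_mul. destruct (frobenius_iter Q d e) as [f ->].
  set (R := P * (P ^ Z.of_nat e * Q)).
  destruct (binomial_truncation R (add d (mul (cst P) f)) u) as [E ->].
  assert (Hexpand : c1 (mul (add (add one (mul (cst (Z.of_nat u * R)) (add d (mul (cst P) f))))
                                 (mul (cst (R * R)) E)) w)
    = c1 w + R * (Z.of_nat u * c1 (mul d w)
                  + P * (Z.of_nat u * c1 (mul f w) + P ^ Z.of_nat e * Q * c1 (mul E w))))
    by (unfold R; cbn [c0 c1 c2 add mul cst one]; ring).
  rewrite Hexpand, Hw, Z.add_0_l.
  assert (HR : R <> 0).
  { unfold R. pose proof (prime_ge_2 _ P_prime).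
    apply Z.neq_mul_0; split; [lia|]. apply Z.neq_mul_0; split; [apply Z.pow_nonzero; lia | exact HQ]. }
  intros Hzero. apply Z.mul_eq_0 in Hzero as [Hzero|Hzero]; [exact (HR Hzero)|].
  assert (Hdiv : (P | Z.of_nat u * c1 (mul d w))).
  { exists (- (Z.of_nat u * c1 (mul f w) + P ^ Z.of_nat e * Q * c1 (mul E w))). lia. }
  destruct (prime_mult _ P_prime _ _ Hdiv); contradiction.
Qed.

(* The same, with A only known modulo P² Q: this is the form that is checked by
   computation. *)
Theorem padic_isolation_mod Q A d w :
  Q <> 0 -> congr (P * P * Q) A (add one (mul (cst (P * Q)) d)) ->
  c1 w = 0 -> ~ (P | c1 (mul d w)) -> isolated A w.
Proof.
  intros HQ [E ->] Hw Hd.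
  replace (add (add one (mul (cst (P * Q)) d)) (mul (cst (P * P * Q)) E))
    with (add one (mul (cst (P * Q)) (add d (mul (cst P) E)))) by (rewrite !cst_mul; ring).
  apply padic_isolation; [exact HQ | exact Hw |].
  intros Hdiv. apply Hd.
  replace (c1 (mul d w)) with (c1 (mul (add d (mul (cst P) E)) w) - P * c1 (mul E w))
    by (cbn [c0 c1 c2 add mul cst]; ring).
  apply Z.divide_sub_r; [exact Hdiv | apply Z.divide_factor_l].
Qed.

End PadicIsolation.

(** Skolem's method for the sequence k ↦ [γ^k v]_1, k ∈ Z. *)

Lemma npow_one n : npow one n = one.
Proof. induction n as [|n IH]; cbn [npow]; [reflexivity | rewrite IH; ring]. Qed.

Lemma gpow_multiple L t :
  (0 <= t -> gpow (Z.of_nat L * t) = npow (npow gam L) (Z.to_nat t)) /\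
  (t <= 0 -> gpow (Z.of_nat L * t) = npow (npow gam_inv L) (Z.to_nat (- t))).
Proof.
  split; intros Ht; rewrite <- npow_mul.
  - rewrite <- gpow_nat. f_equal. lia.
  - rewrite <- gpow_neg_nat. f_equal. lia.
Qed.

Lemma gpow_period M L t :
  congr M (npow gam L) one -> congr M (npow gam_inv L) one ->
  congr M (gpow (Z.of_nat L * t)) one.
Proof.
  intros Hpos Hneg. rewrite <- (npow_one (Z.to_nat (Z.abs t))).
  destruct (Z_le_gt_dec 0 t).
  - rewrite (proj1 (gpow_multiple L t)) by lia.
    replace (Z.abs t) with t by lia. now apply congr_npow.
  - rewrite (proj2 (gpow_multiple L t)) by lia.
    replace (Z.abs t) with (- t) by lia. now apply congr_npow.
Qed.

Lemma c1_periodic M L v q r :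
  congr M (npow gam L) one -> congr M (npow gam_inv L) one ->
  c1 (mul (gpow (Z.of_nat L * q + r)) v) mod M = c1 (mul (gpow r) v) mod M.
Proof.
  intros Hpos Hneg. apply congr_c1.
  assert (Hshift : congr M (mul (gpow (Z.of_nat L * q)) (mul (gpow r) v)) (mul one (mul (gpow r) v)))
    by (apply congr_mul; [now apply gpow_period | apply congr_refl]).
  replace (mul one (mul (gpow r) v)) with (mul (gpow r) v) in Hshift by ring.
  rewrite gpow_add. replace (mul (mul (gpow (Z.of_nat L * q)) (gpow r)) v)
    with (mul (gpow (Z.of_nat L * q)) (mul (gpow r) v)) by ring.
  exact Hshift.
Qed.

(* The sieve walks through r, r+1, ..., r+n-1, keeping cur ≡ γ^r v (mod M). *)
Fixpoint sieve (M L : Z) (zs : list Z) (n : nat) (r : Z) (cur : O3) : bool :=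
  match n with
  | O => true
  | S n => (negb (c1 cur mod M =? 0) || existsb (fun z0 => z0 mod L =? r) zs)
           && sieve M L zs n (r + 1) (reduce M (mul gam cur))
  end.

Lemma sieve_sound M L zs v n : M <> 0 -> forall r cur,
  sieve M L zs n r cur = true -> congr M (mul (gpow r) v) cur ->
  forall r', r <= r' < r + Z.of_nat n ->
  c1 (mul (gpow r') v) mod M <> 0 \/ exists z0, In z0 zs /\ z0 mod L = r'.
Proof.
  intros HM. induction n as [|n IH]; intros r cur Hsieve Hcur r' Hr'; [lia|].
  cbn [sieve] in Hsieve. apply andb_prop in Hsieve as [Hhere Hrest].
  destruct (Z.eq_dec r' r) as [->|Hne].
  - apply orb_prop in Hhere as [Hc|Hz].
    + left. rewrite (congr_c1 _ _ _ Hcur). now apply Z.eqb_neq, negb_true_iff.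
    + right. apply existsb_exists in Hz as (z0 & Hin & Hz0).
      exists z0. split; [exact Hin | now apply Z.eqb_eq].
  - apply (IH (r + 1) (reduce M (mul gam cur)) Hrest); [| lia].
    eapply congr_trans; [| apply congr_reduce, HM].
    replace (mul (gpow (r + 1)) v) with (mul gam (mul (gpow r) v))
      by (rewrite Z.add_1_r, gpow_succ; ring).
    apply congr_mul; [apply congr_refl | exact Hcur].
Qed.

Theorem skolem M L zs v :
  M <> 0 -> (0 < L)%nat ->
  congr M (npow gam L) one -> congr M (npow gam_inv L) one ->
  sieve M (Z.of_nat L) zs L 0 (reduce M v) = true ->
  (forall z0, In z0 zs ->
     c1 (mul (gpow z0) v) = 0 /\
     isolated (npow gam L) (mul (gpow z0) v) /\ isolated (npow gam_inv L) (mul (gpow z0) v)) ->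
  forall z, c1 (mul (gpow z) v) = 0 -> In z zs.
Proof.
  intros HM HL Hpos Hneg Hsieve Hzeros z Hz.
  assert (Hdiv := Z.div_mod z (Z.of_nat L) ltac:(lia)).
  assert (Hrange := Z.mod_pos_bound z (Z.of_nat L) ltac:(lia)).
  destruct (sieve_sound M (Z.of_nat L) zs v L HM 0 (reduce M v) Hsieve)
    with (r' := z mod Z.of_nat L) as [Hnonzero | (z0 & Hin & Hz0)]; [| lia | |].
  - replace (mul (gpow 0) v) with v by (cbn [gpow]; ring). apply congr_reduce, HM.
  - exfalso. apply Hnonzero.
    rewrite <- (c1_periodic M L v (z / Z.of_nat L)), <- Hdiv, Hz by assumption. reflexivity.
  - destruct (Hzeros z0 Hin) as (_ & Hiso_pos & Hiso_neg).
    assert (Hdiv0 := Z.div_mod z0 (Z.of_nat L) ltac:(lia)).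
    set (t := z / Z.of_nat L - z0 / Z.of_nat L).
    assert (Hzt : z = Z.of_nat L * t + z0) by (unfold t; lia). clearbody t.
    destruct (Z.eq_dec t 0) as [Ht0|Ht0]; [replace z with z0 by lia; exact Hin | exfalso].
    rewrite Hzt, gpow_add in Hz.
    replace (mul (mul (gpow (Z.of_nat L * t)) (gpow z0)) v)
      with (mul (gpow (Z.of_nat L * t)) (mul (gpow z0) v)) in Hz by ring.
    destruct (Z_le_gt_dec 0 t).
    + rewrite (proj1 (gpow_multiple L t)) in Hz by lia. exact (Hiso_pos (Z.to_nat t) ltac:(lia) Hz).
    + rewrite (proj2 (gpow_multiple L t)) in Hz by lia. exact (Hiso_neg (Z.to_nat (- t)) ltac:(lia) Hz).
Qed.

Definition O3_eqb (x y : O3) : bool := (c0 x =? c0 y) && (c1 x =? c1 y) && (c2 x =? c2 y).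

Lemma O3_eqb_eq x y : O3_eqb x y = true -> x = y.
Proof.
  unfold O3_eqb. intros H. apply andb_prop in H as [H H2]. apply andb_prop in H as [H0 H1].
  apply Z.eqb_eq in H0, H1, H2. now apply O3_ext.
Qed.

Lemma frobenius_lift_5 : frobenius_lift 5.
Proof.
  intros Y. exists (add (add (add (mul (cst 2) Y) (mul (cst 10) (npow Y 2)))
                         (mul (cst 25) (npow Y 3))) (mul (cst 25) (npow Y 4))).
  change (Z.of_nat 5) with 5. rewrite cst_mul. cbn [npow]. ring.
Qed.

Lemma frobenius_lift_7 : frobenius_lift 7.
Proof.
  intros Y. exists (add (add (add (add (add (mul (cst 3) Y) (mul (cst 35) (npow Y 2)))
    (mul (cst 245) (npow Y 3))) (mul (cst 1029) (npow Y 4))) (mul (cst 2401) (npow Y 5)))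
    (mul (cst 2401) (npow Y 6))).
  change (Z.of_nat 7) with 7. rewrite cst_mul. cbn [npow]. ring.
Qed.

Lemma prime_by_gcd p : 1 < p ->
  forallb (fun n => Z.gcd n p =? 1) (map Z.of_nat (seq 1 (Z.to_nat p - 1))) = true -> prime p.
Proof.
  intros Hp Hgcd. apply prime_intro; [exact Hp|]. intros n Hn.
  rewrite forallb_forall in Hgcd.
  apply Zgcd_1_rel_prime, Z.eqb_eq, Hgcd, in_map_iff.
  exists (Z.to_nat n). split; [lia | apply in_seq; lia].
Qed.

Definition isolation_moduli : list (nat * Z) := (5%nat, 5) :: (7%nat, 1) :: nil.

Lemma isolation_moduli_ok p Q :
  In (p, Q) isolation_moduli -> prime (Z.of_nat p) /\ frobenius_lift p /\ Q <> 0.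
Proof.
  cbn. intros [[= <- <-] | [[= <- <-] | []]];
    (split; [apply prime_by_gcd; reflexivity | split; [| discriminate]]).
  - exact frobenius_lift_5.
  - exact frobenius_lift_7.
Qed.

Definition isolation_check (x : O3) (L : nat) (w : O3) (pQ : nat * Z) : bool :=
  let P := Z.of_nat (fst pQ) in
  let Q := snd pQ in
  let a := powmod (P * P * Q) x L in
  let d := mk ((c0 a - 1) / (P * Q)) (c1 a / (P * Q)) (c2 a / (P * Q)) in
  O3_eqb a (add one (mul (cst (P * Q)) d)) && negb (c1 (mul d w) mod P =? 0).

Lemma isolation_check_sound x L w pQ :
  In pQ isolation_moduli -> c1 w = 0 -> isolation_check x L w pQ = true -> isolated (npow x L) w.
Proof.
  destruct pQ as [p Q]. intros Hin Hw Hcheck.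
  destruct (isolation_moduli_ok p Q Hin) as (Hprime & Hfrob & HQ).
  pose proof (prime_ge_2 _ Hprime) as Hp2.
  unfold isolation_check in Hcheck; cbn [fst snd] in Hcheck.
  apply andb_prop in Hcheck as [Ha Hd]. apply O3_eqb_eq in Ha.
  apply negb_true_iff, Z.eqb_neq in Hd.
  eapply (padic_isolation_mod p Hprime Hfrob Q); [exact HQ | | exact Hw |].
  - rewrite <- Ha. apply congr_powmod. apply Z.neq_mul_0; split; [nia | exact HQ].
  - intros Hdiv. apply Hd. apply Z.mod_divide; [lia | exact Hdiv].
Qed.

Definition skolem_check (M : Z) (L : nat) (zs : list Z) (v : O3) : bool :=
  negb (M =? 0) && Nat.ltb 0 L
  && O3_eqb (powmod M gam L) one && O3_eqb (powmod M gam_inv L) one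
  && sieve M (Z.of_nat L) zs L 0 (reduce M v)
  && forallb (fun z0 => let w := mul (gpow z0) v in
       (c1 w =? 0) && existsb (isolation_check gam L w) isolation_moduli
                   && existsb (isolation_check gam_inv L w) isolation_moduli) zs.

Theorem skolem_check_sound M L zs v :
  skolem_check M L zs v = true -> forall z, c1 (mul (gpow z) v) = 0 -> In z zs.
Proof.
  unfold skolem_check. intros Hcheck.
  repeat rewrite andb_true_iff in Hcheck.
  destruct Hcheck as (((((HM & HL) & Hpos) & Hneg) & Hsieve) & Hzeros).
  apply negb_true_iff, Z.eqb_neq in HM. apply Nat.ltb_lt in HL.
  apply O3_eqb_eq in Hpos, Hneg.
  apply (skolem M L zs v HM HL); [rewrite <- Hpos | rewrite <- Hneg | exact Hsieve |];
    try (apply congr_powmod; exact HM).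
  intros z0 Hin. rewrite forallb_forall in Hzeros. specialize (Hzeros z0 Hin).
  repeat rewrite andb_true_iff in Hzeros. destruct Hzeros as ((Hw & Hiso_pos) & Hiso_neg).
  apply Z.eqb_eq in Hw.
  apply existsb_exists in Hiso_pos as (pQ & HpQ & Hpos').
  apply existsb_exists in Hiso_neg as (pQ' & HpQ' & Hneg').
  split; [exact Hw | split].
  - exact (isolation_check_sound _ _ _ _ HpQ Hw Hpos').
  - exact (isolation_check_sound _ _ _ _ HpQ' Hw Hneg').
Qed.

(* N(a + bγ + cγ²): the determinant of multiplication by a + bγ + cγ², expanded
   along its first row. *)
Definition norm (x : O3) : Z :=
  let a := c0 x in let b := c1 x in let c := c2 x in
  a * ((a + c) * (a + c) - b * (b + c)) - b * (c * (a + c) - b * b)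
  + c * (c * (b + c) - (a + c) * b).

Lemma norm_mul x y : norm (mul x y) = norm x * norm y.
Proof. unfold norm; cbn [c0 c1 c2 mul]. ring. Qed.

Lemma norm_cst c : norm (cst c) = c * c * c.
Proof. unfold norm; cbn [c0 c1 c2 cst]. ring. Qed.

Lemma norm_gpow k : norm (gpow k) = 1.
Proof.
  assert (Hstep : forall k, norm (gpow (Z.succ k)) = norm (gpow k))
    by (intros; rewrite gpow_succ, norm_mul; change (norm gam) with 1; ring).
  induction k as [|k IH|k IH] using Z.peano_ind; [reflexivity | now rewrite Hstep |].
  now rewrite <- Hstep, Z.succ_pred.
Qed.

(** The real place γ ↦ g, where g ≈ 1.3247 is the real root of X³ - X - 1. *)

Local Open Scope R_scope.

Lemma real_root : {g : R | g * g * g = g + 1 /\ 13247/10000 <= g <= 13248/10000}.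
Proof.
  assert (Hcont : continuity (fun x => x * x * x - x - 1)) by reg.
  destruct (IVT (fun x => x * x * x - x - 1) (13247/10000) (13248/10000) Hcont)
    as [z [Hz Hroot]]; try lra.
  exists z. split; lra.
Qed.

Definition g : R := proj1_sig real_root.
Lemma g_cube : g * g * g = g + 1. Proof. exact (proj1 (proj2_sig real_root)). Qed.
Lemma g_bounds : 13247/10000 <= g <= 13248/10000. Proof. exact (proj2 (proj2_sig real_root)). Qed.

Definition embed (x : O3) : R := IZR (c0 x) + IZR (c1 x) * g + IZR (c2 x) * g * g.

Lemma embed_mul x y : embed (mul x y) = embed x * embed y.
Proof.
  destruct x as [a0 a1 a2], y as [b0 b1 b2]. unfold embed. cbn [mul c0 c1 c2].
  rewrite ?plus_IZR, ?mult_IZR.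
  (* The difference of both sides is a multiple of g³ - g - 1. *)
  transitivity ((IZR a0 + IZR a1 * g + IZR a2 * g * g) * (IZR b0 + IZR b1 * g + IZR b2 * g * g)
    - (IZR a1 * IZR b2 + IZR a2 * IZR b1 + IZR a2 * IZR b2 * g) * (g * g * g - g - 1));
    [ring | rewrite g_cube; ring].
Qed.

Lemma embed_cst c : embed (cst c) = IZR c.
Proof. unfold embed; cbn. ring. Qed.

Lemma embed_gpow_succ k : embed (gpow (Z.succ k)) = g * embed (gpow k).
Proof. rewrite gpow_succ, embed_mul. unfold embed at 1; cbn. ring. Qed.

Lemma embed_gpow_nat n : embed (gpow (Z.of_nat n)) = g ^ n.
Proof.
  induction n as [|n IH]; [unfold embed; cbn; ring|].
  rewrite Nat2Z.inj_succ, embed_gpow_succ, IH. reflexivity.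
Qed.

Lemma embed_gpow_neg_nat n : embed (gpow (- Z.of_nat n)) * g ^ n = 1.
Proof.
  rewrite <- embed_gpow_nat, <- embed_mul, <- gpow_add, Z.add_opp_diag_l.
  unfold embed; cbn. ring.
Qed.

Lemma discrete_crossing (P : Z -> Prop) lo hi :
  (forall k, {P k} + {~ P k}) -> (lo <= hi)%Z -> P lo -> ~ P hi ->
  exists k, P k /\ ~ P (Z.succ k).
Proof.
  intros Pdec Hle. remember (Z.to_nat (hi - lo)) as n eqn:Hn.
  revert lo Hle Hn. induction n as [|n IH]; intros lo Hle Hn Hlo Hhi.
  - replace hi with lo in Hhi by lia. contradiction.
  - destruct (Pdec (Z.succ lo)) as [Hs|Hs]; [| now exists lo].
    apply (IH (Z.succ lo)); [lia | lia | exact Hs | exact Hhi].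
Qed.

Lemma fundamental_domain r : 0 < r -> exists k, 1 <= embed (gpow k) * r < g.
Proof.
  intros Hr. pose proof g_bounds.
  destruct (Pow_x_infinity g ltac:(rewrite Rabs_right; lra) (r + / r + 1)) as [n Hn].
  specialize (Hn n (Nat.le_refl n)). rewrite Rabs_right in Hn by (apply Rle_ge, pow_le; lra).
  assert (Hinv : 0 < / r) by (apply Rinv_0_lt_compat, Hr).
  assert (Hrr : r * / r = 1) by (field; lra).
  destruct (discrete_crossing (fun k => embed (gpow k) * r < 1) (- Z.of_nat n) (Z.of_nat n))
    as [k [Hk Hk1]].
  - intros k. apply Rlt_dec.
  - lia.
  - pose proof (embed_gpow_neg_nat n) as Hneg. nra.
  - rewrite embed_gpow_nat. nra.
  - cbv beta in Hk, Hk1. exists (Z.succ k).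
    rewrite embed_gpow_succ, Rmult_assoc in Hk1 |- *. split; nra.
Qed.

(* 4 N(x) = embed(x) · Qf(x), where the cofactor Qf, the product of the two complex
   conjugate embeddings, is a positive definite form. *)
Definition qform (x : O3) : R :=
  let a := IZR (c0 x) in let b := IZR (c1 x) in let c := IZR (c2 x) in
  (2 * a - b * g + c * (2 - g * g)) ^ 2 + (3 * g * g - 4) * (b - c * g) ^ 2.

Lemma norm_factorization x : 4 * IZR (norm x) = embed x * qform x.
Proof.
  destruct x as [a b c]. unfold norm, qform, embed. cbn [c0 c1 c2].
  repeat rewrite ?plus_IZR, ?minus_IZR, ?mult_IZR.
  set (A := IZR a). set (B := IZR b). set (C := IZR c).
  transitivity ((A + B * g + C * g * g) * ((2 * A - B * g + C * (2 - g * g)) ^ 2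
                  + (3 * g * g - 4) * (B - C * g) ^ 2)
     + (-4 * C ^ 3 + 4 * C ^ 3 * g - 4 * C ^ 3 * g ^ 3 + 4 * B * C ^ 2 - 4 * B ^ 3
        + 12 * A * B * C) * (g * g * g - g - 1));
    [ring | rewrite g_cube; ring].
Qed.

Lemma qform_nonneg x : 0 <= qform x.
Proof.
  pose proof g_bounds. unfold qform.
  assert (0 < 3 * g * g - 4) by nra.
  pose proof (pow2_ge_0 (IZR (c1 x) - IZR (c2 x) * g)).
  pose proof (pow2_ge_0 (2 * IZR (c0 x) - IZR (c1 x) * g + IZR (c2 x) * (2 - g * g))).
  nra.
Qed.

Lemma product_bound x y X Y : - X <= x <= X -> 0 <= y <= Y -> - (X * Y) <= x * y <= X * Y.
Proof. intros; split; nra. Qed.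

Lemma integer_between z lo hi : IZR lo - 1 < IZR z < IZR hi + 1 -> (lo <= z <= hi)%Z.
Proof.
  intros [Hlo Hhi].
  assert (lo - 1 < z)%Z by (apply lt_IZR; rewrite minus_IZR; exact Hlo).
  assert (z < hi + 1)%Z by (apply lt_IZR; rewrite plus_IZR; exact Hhi).
  lia.
Qed.

Lemma integer_bound z B : (0 <= B)%Z -> - IZR B - 1 < IZR z < IZR B + 1 -> - IZR B <= IZR z <= IZR B.
Proof.
  intros HB Hz. rewrite <- opp_IZR in Hz |- *.
  apply integer_between in Hz. split; apply IZR_le; lia.
Qed.

(* In the fundamental domain, N(x) <= 7 forces |a| <= 17, |b| <= 8, |c| <= 3. The
   bounds come from qform(x) <= 28 and the inversion of the three linear forms
   embed x, 2a - bg + c(2 - g²) and b - cg. *)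
Lemma box_bounds x : 1 <= embed x < g -> (norm x <= 7)%Z ->
  (-17 <= c0 x <= 17 /\ -8 <= c1 x <= 8 /\ -3 <= c2 x <= 3)%Z.
Proof.
  intros [Hlo Hhi] HN. pose proof g_bounds as Hg.
  assert (Hq : qform x <= 28).
  { pose proof (norm_factorization x). pose proof (qform_nonneg x). apply IZR_le in HN.
    assert (0 <= (embed x - 1) * qform x) by (apply Rmult_le_pos; lra). nra. }
  unfold qform, embed in *.
  set (a := IZR (c0 x)) in *. set (b := IZR (c1 x)) in *. set (c := IZR (c2 x)) in *.
  set (rho := a + b * g + c * g * g) in *.
  set (re := 2 * a - b * g + c * (2 - g * g)) in *.
  set (im := b - c * g) in *.
  assert (Hkappa : 12644/10000 <= 3 * g * g - 4) by nra.
  assert (Hre : - (53/10) <= re <= 53/10).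
  { assert (0 <= (3 * g * g - 4) * im ^ 2) by (apply Rmult_le_pos; [lra | apply pow2_ge_0]). nra. }
  assert (Him : - (472/100) <= im <= 472/100).
  { assert (12644/10000 * im ^ 2 <= (3 * g * g - 4) * im ^ 2)
      by (apply Rmult_le_compat_r; [apply pow2_ge_0 | lra]).
    assert (0 <= re ^ 2) by apply pow2_ge_0. nra. }
  assert (Hc_eq : (6 * g * g - 2) * c = 2 * rho - re - 3 * (im * g)) by (unfold rho, re, im; ring).
  pose proof (product_bound im g (472/100) (13248/10000) Him ltac:(lra)) as Hig.
  assert (Hc : - 3 <= c <= 3).
  { apply (integer_bound (c2 x) 3); [lia|]. fold c.
    assert (8527/1000 <= 6 * g * g - 2) by nra. split; nra. }
  assert (Hb : - 8 <= b <= 8).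
  { pose proof (product_bound c g 3 (13248/10000) Hc ltac:(lra)).
    apply (integer_bound (c1 x) 8); [lia|]. fold b. unfold im in Him. lra. }
  assert (Hg2 : 0 <= g * g <= 17552/10000) by nra.
  pose proof (product_bound b g 8 (13248/10000) Hb ltac:(lra)).
  pose proof (product_bound c (g * g) _ _ Hc Hg2).
  assert (Ha : - 17 <= a <= 17).
  { assert (c * g * g = c * (g * g)) by ring.
    apply (integer_bound (c0 x) 17); [lia|]. fold a. unfold rho in *. lra. }
  destruct Ha as [Ha1 Ha2], Hb as [Hb1 Hb2], Hc as [Hc1 Hc2].
  apply le_IZR in Ha1, Ha2, Hb1, Hb2, Hc1, Hc2. lia.
Qed.

Local Open Scope Z_scope.

Definition rhs (h : Z) : Prop := h = 1 \/ h = 5 \/ h = 7.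

Definition representative (h : Z) : O3 :=
  if h =? 1 then one else if h =? 5 then mk 1 0 1 else mk (-1) 0 2.

Definition range (lo : Z) (n : nat) : list Z := map (fun i => lo + Z.of_nat i) (seq 0 n).

Lemma in_range lo n z : lo <= z < lo + Z.of_nat n -> In z (range lo n).
Proof.
  intros Hz. apply in_map_iff. exists (Z.to_nat (z - lo)). split; [lia | apply in_seq; lia].
Qed.

Definition in_orbit (v y : O3) : bool :=
  existsb (fun j => O3_eqb y (mul (gpow j) v) || O3_eqb y (opp (mul (gpow j) v)))
          (range (-17) 35).

Definition box_check : bool :=
  forallb (fun a => forallb (fun b => forallb (fun c =>
    let y := mk a b c in let h := norm y in
    negb ((h =? 1) || (h =? 5) || (h =? 7)) || in_orbit (representative h) y)
    (range (-3) 7)) (range (-8) 17)) (range (-17) 35).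

Lemma box_check_true : box_check = true.
Proof. vm_compute. reflexivity. Qed.

Lemma box_orbit y :
  -17 <= c0 y <= 17 -> -8 <= c1 y <= 8 -> -3 <= c2 y <= 3 ->
  rhs (norm y) ->
  exists j, y = mul (gpow j) (representative (norm y)) \/
            y = opp (mul (gpow j) (representative (norm y))).
Proof.
  intros Ha Hb Hc Hh. pose proof box_check_true as Hbox. unfold box_check in Hbox.
  rewrite forallb_forall in Hbox. specialize (Hbox (c0 y) ltac:(apply in_range; lia)).
  rewrite forallb_forall in Hbox. specialize (Hbox (c1 y) ltac:(apply in_range; lia)).
  rewrite forallb_forall in Hbox. specialize (Hbox (c2 y) ltac:(apply in_range; lia)).
  replace (mk (c0 y) (c1 y) (c2 y)) with y in Hbox by (destruct y; reflexivity).
  apply orb_prop in Hbox as [Hbad | Horbit].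
  - exfalso. cbv zeta in Hbad. apply negb_true_iff in Hbad.
    destruct Hh as [Hh | [Hh | Hh]]; rewrite Hh in Hbad; discriminate.
  - apply existsb_exists in Horbit as (j & _ & Hj). exists j.
    apply orb_prop in Hj as [Hj | Hj]; apply O3_eqb_eq in Hj; [left | right]; exact Hj.
Qed.

(* An element of norm ±h, h ∈ {1, 5, 7}, is an associate of the representative:
   scale it into the fundamental domain, where the box search applies. *)
Theorem associates x h : rhs h -> norm x = h \/ norm x = - h ->
  exists k, x = mul (gpow k) (representative h) \/ x = opp (mul (gpow k) (representative h)).
Proof.
  intros Hh HN.
  assert (Hh_pos : 0 < h) by (destruct Hh as [-> | [-> | ->]]; lia).
  assert (Hsign : exists s, (s = 1 \/ s = -1) /\ (0 < embed (mul (cst s) x))%R).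
  { assert (Hnz : embed x <> 0%R).
    { intros H0. pose proof (norm_factorization x) as Hf. rewrite H0, Rmult_0_l in Hf.
      assert (Hzero : norm x = 0) by (apply eq_IZR; lra). lia. }
    destruct (Rlt_le_dec 0 (embed x)); [exists 1 | exists (-1)];
      (split; [lia | rewrite embed_mul, embed_cst; lra]). }
  destruct Hsign as (s & Hs & Hpos).
  destruct (fundamental_domain _ Hpos) as [k Hk]. rewrite <- embed_mul in Hk.
  set (y := mul (gpow k) (mul (cst s) x)) in Hk.
  assert (HNy : norm y = s * norm x) by (unfold y; rewrite !norm_mul, norm_gpow, norm_cst; nia).
  assert (HNy_pos : 0 <= norm y).
  { pose proof (norm_factorization y). pose proof (qform_nonneg y).
    apply le_IZR. nra. }
  assert (Hy : norm y = h) by lia.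
  assert (HN7 : norm y <= 7) by (destruct Hh as [-> | [-> | ->]]; lia).
  destruct (box_bounds y Hk HN7) as (Ha & Hb & Hc).
  destruct (box_orbit y Ha Hb Hc ltac:(rewrite Hy; exact Hh)) as [j Hj]. rewrite Hy in Hj.
  exists (j - k).
  assert (Hx : x = mul (cst s) (mul (gpow (- k)) y)).
  { unfold y. replace (mul (cst s) (mul (gpow (- k)) (mul (gpow k) (mul (cst s) x))))
      with (mul (gpow (- k + k)) (mul (cst (s * s)) x)) by (rewrite gpow_add, cst_mul; ring).
    rewrite Z.add_opp_diag_l. replace (s * s) with 1 by lia. cbn [gpow]. ring. }
  rewrite Hx. replace (j - k) with (- k + j) by lia. rewrite gpow_add.
  destruct Hs as [-> | ->], Hj as [-> | ->]; [left | right | right | left]; ring.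
Qed.

(* Modulo M = 3² 5² 7 11 79, both γ and γ⁻¹ have order dividing L = 3120. *)
Definition skolem_modulus : Z := 1368675.
Definition skolem_period : nat := 3120.

Definition zero_exponents (h : Z) : list Z :=
  if h =? 1 then -14 :: -5 :: -1 :: 0 :: 2 :: nil
  else if h =? 5 then -6 :: 0 :: nil
  else -8 :: 0 :: nil.

Lemma zero_exponents_complete h z : rhs h ->
  c1 (mul (gpow z) (representative h)) = 0 -> In z (zero_exponents h).
Proof.
  intros Hh. apply (skolem_check_sound skolem_modulus skolem_period).
  destruct Hh as [-> | [-> | ->]]; vm_compute; reflexivity.
Qed.

Definition solutions (h : Z) : list (Z * Z) :=
  if h =? 1 then (1, 0) :: (-1, 0) :: (0, 1) :: (0, -1) :: (-1, 1) :: (1, -1)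
                 :: (2, -1) :: (-2, 1) :: (-7, 4) :: (7, -4) :: nil
  else if h =? 5 then (1, 1) :: (-1, -1) :: (-3, 2) :: (3, -2) :: nil
  else (-1, 2) :: (1, -2) :: (-5, 3) :: (5, -3) :: nil.

Definition in_solutions (h : Z) (m n : Z) : bool :=
  existsb (fun mn => (fst mn =? m) && (snd mn =? n)) (solutions h).

Lemma in_solutions_In h m n : in_solutions h m n = true -> In (m, n) (solutions h).
Proof.
  intros H. apply existsb_exists in H as ([m' n'] & Hin & Heq).
  apply andb_prop in Heq as [Hm Hn]. apply Z.eqb_eq in Hm, Hn. cbn in Hm, Hn. subst. exact Hin.
Qed.

Definition solutions_check (h : Z) : bool :=
  forallb (fun k => let w := mul (gpow k) (representative h) in
             in_solutions h (c0 w) (c2 w) && in_solutions h (- c0 w) (- c2 w)) (zero_exponents h)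
  && forallb (fun mn => let N := norm (mk (fst mn) 0 (snd mn)) in (N =? h) || (N =? - h)) (solutions h).

Theorem thue_solutions h m n : rhs h ->
  (norm (mk m 0 n) = h \/ norm (mk m 0 n) = - h) <-> In (m, n) (solutions h).
Proof.
  intros Hh.
  assert (Hcheck : solutions_check h = true)
    by (destruct Hh as [-> | [-> | ->]]; vm_compute; reflexivity).
  apply andb_prop in Hcheck as [Hcomplete Hsound]. rewrite forallb_forall in Hcomplete, Hsound.
  split.
  - intros HN. destruct (associates _ _ Hh HN) as [k Hk].
    set (w := mul (gpow k) (representative h)) in *.
    assert (Hw : c1 w = 0)
      by (destruct Hk as [Hk | Hk]; apply (f_equal c1) in Hk; cbn [c1 opp] in Hk; lia).
    specialize (Hcomplete k (zero_exponents_complete h k Hh Hw)). cbv zeta in Hcomplete.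
    apply andb_prop in Hcomplete as [Hplus Hminus].
    destruct Hk as [Hk | Hk].
    + replace m with (c0 w) by (symmetry; exact (f_equal c0 Hk)).
      replace n with (c2 w) by (symmetry; exact (f_equal c2 Hk)).
      now apply in_solutions_In.
    + replace m with (- c0 w) by (symmetry; exact (f_equal c0 Hk)).
      replace n with (- c2 w) by (symmetry; exact (f_equal c2 Hk)).
      now apply in_solutions_In.
  - intros Hin. specialize (Hsound (m, n) Hin). cbn [fst snd] in Hsound.
    apply orb_prop in Hsound as [H | H]; apply Z.eqb_eq in H; [left | right]; exact H.
Qed.

From mathcomp Require Import all_boot all_order all_algebra ring ssrZ.
Import GRing.Theory ssrZ.Instances.
Local Open Scope ring_scope.

Lemma normK_formula (m n : int) :
  normK m 0 n = m ^+ 3 + 2 * m ^+ 2 * n + m * n ^+ 2 + n ^+ 3.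
Proof.
  rewrite /normK (expand_det_row _ ord0) !big_ord_recl big_ord0 /cofactor.
  rewrite !(expand_det_row _ ord0) !big_ord_recl !big_ord0 /cofactor !det_mx11.
  rewrite !mxE /= /bump /=. ring.
Qed.

Lemma normK_norm (m n : Z) : normK (int_of_Z m) 0 (int_of_Z n) = int_of_Z (norm (mk m 0 n)).
Proof.
  rewrite normK_formula /norm /=.
  have intD a b : int_of_Z (a + b)%Z = int_of_Z a + int_of_Z b by exact: rmorphD.
  have intB a b : int_of_Z (a - b)%Z = int_of_Z a - int_of_Z b by exact: rmorphB.
  have intM a b : int_of_Z (a * b)%Z = int_of_Z a * int_of_Z b by exact: rmorphM.
  rewrite !(intD, intB, intM) /=. ring.
Qed.

Lemma mem_In (T : eqType) (x : T) (s : seq T) : x \in s <-> List.In x s.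
Proof.
  elim: s => [|y s IH] //=. rewrite in_cons -IH.
  by split=> [/orP[/eqP->|]|[->|->]]; [left | right | rewrite eqxx | rewrite orbT].
Qed.

Definition int_pair (mn : Z * Z) : int * int := (int_of_Z mn.1, int_of_Z mn.2).

Lemma int_pair_inj : injective int_pair.
Proof.
  have inj : injective int_of_Z by exact: can_inj int_of_ZK.
  by move=> [a b] [c d] [] /inj -> /inj ->.
Qed.

Lemma thue_int (h : Z) (L : seq (int * int)) :
  rhs h -> map int_pair (solutions h) = L ->
  forall m n : int, (normK m 0 n = int_of_Z h \/ normK m 0 n = - int_of_Z h) <-> (m, n) \in L.
Proof.
  move=> Hh <- m n.
  rewrite -[m]Z_of_intK -[n]Z_of_intK normK_norm.
  rewrite -[(int_of_Z _, int_of_Z _)]/(int_pair (_, _)) mem_map ?mem_In; last exact: int_pair_inj.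
  rewrite -thue_solutions // -(rmorphN int_of_Z).
  have inj : injective int_of_Z by exact: can_inj int_of_ZK.
  split=> -[H|H]; [left; exact: inj H | right; exact: inj H | left | right]; rewrite H; reflexivity.
Qed.

Theorem lemma1 :
  (forall m n : int,
     (normK m 0 n = 1 \/ normK m 0 n = -1) <->
     (m, n) \in [:: (1, 0); (-1, 0); (0, 1); (0, -1); (-1, 1); (1, -1);
                   (2, -1); (-2, 1); (-7, 4); (7, -4)]) /\
  (forall m n : int,
     (normK m 0 n = 5 \/ normK m 0 n = -5) <->
     (m, n) \in [:: (1, 1); (-1, -1); (-3, 2); (3, -2)]) /\
  (forall m n : int,
     (normK m 0 n = 7 \/ normK m 0 n = -7) <->
     (m, n) \in [:: (-1, 2); (1, -2); (-5, 3); (5, -3)]).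
Proof.
  split; [|split].
  - by apply: (thue_int 1); [left | ].
  - by apply: (thue_int 5); [right; left | ].
  - by apply: (thue_int 7); [right; right | ].

Qed.
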